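(* Let $f : X \to \mathbb{R}$ be arbitrary, and suppose there exist $r \in \mathbb{R}$ and a Cantor set $C \subseteq X$ such that, in the subspace topology of $C$, the set $C \cap \{f \ge r\}$ is meagre and dense in $C$. Then Player I has a winning strategy in $\Gamma(f)$.
   Context: Let $A$ be a non-empty countable set and $T$ a pruned tree on $A$ (a set of finite sequences of elements of $A$, closed under initial segments, in which every sequence has a proper extension in $T$). Let $X$ be the set of infinite branches of $T$, with the topology generated by the cylinder sets $O(s) = \{x \in X : s \text{ is an initial segment of } x\}$, $s \in T$. A Cantor set is a subset homeomorphic to the middle-thirds Cantor set. $\{f \ge r\} = \{x \in X : f(x) \ge r\}$. The game $\Gamma(f)$: Player I and Player II alternate, Player I moving first; Player I plays $x_0, x_1, \dots \in A$ subject to $(x_0,\dots,x_t) \in T$ for all $t$, and after each move $x_t$ Player II plays a real number $v_t$. Player II wins the run iff $f(x_0,x_1,\dots) = \limsup_{t\to\infty} v_t$; otherwise Player I wins. *)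

From Stdlib Require Import Reals List.
From Coquelicot Require Import Coquelicot.
Import ListNotations.
Open Scope R_scope.

Definition is_tree {A : Type} (T : list A -> Prop) : Prop :=
  forall s t : list A, T (s ++ t) -> T s.

Definition is_pruned_tree {A : Type} (T : list A -> Prop) : Prop :=
  is_tree T /\ forall s, T s -> exists t, t <> nil /\ T (s ++ t).

Definition prefix_of {A : Type} (x : nat -> A) (n : nat) : list A :=
  map x (seq 0 n).

Definition is_branch {A : Type} (T : list A -> Prop) (x : nat -> A) : Prop :=
  forall n, T (prefix_of x n).

Definition branches {A : Type} (T : list A -> Prop) : Type :=
  { x : nat -> A | is_branch T x }.

Definition cyl {A : Type} {T : list A -> Prop} (s : list A) (x : branches T) : Prop :=
  prefix_of (proj1_sig x) (length s) = s.

(* open sets of the topology generated by the cylinders O(s), s in T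
   (they form a base, so open = union of cylinders) *)
Definition openX {A : Type} {T : list A -> Prop} (U : branches T -> Prop) : Prop :=
  forall x, U x -> exists s, T s /\ cyl s x /\ forall y, cyl s y -> U y.

Section Sub.
Context {Y : Type} (op : (Y -> Prop) -> Prop).

Definition rel_open (C V : Y -> Prop) : Prop :=
  exists U, op U /\ forall y, V y <-> (U y /\ C y).

Definition rel_closure (C N : Y -> Prop) (y : Y) : Prop :=
  C y /\ forall V, rel_open C V -> V y -> exists z, V z /\ N z.

Definition rel_interior (C S : Y -> Prop) (y : Y) : Prop :=
  exists V, rel_open C V /\ V y /\ forall z, V z -> S z.

Definition nowhere_dense_in (C N : Y -> Prop) : Prop :=
  (forall y, N y -> C y) /\ forall y, ~ rel_interior C (rel_closure C N) y.

Definition meagre_in (C M : Y -> Prop) : Prop :=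
  (forall y, M y -> C y) /\
  exists Ns : nat -> Y -> Prop,
    (forall n, nowhere_dense_in C (Ns n)) /\ forall y, M y -> exists n, Ns n y.

Definition dense_in (C D : Y -> Prop) : Prop :=
  (forall y, D y -> C y) /\ forall y, C y -> rel_closure C D y.
End Sub.

Definition cont_on {Y Z : Type} (opY : (Y -> Prop) -> Prop) (opZ : (Z -> Prop) -> Prop)
  (C : Y -> Prop) (h : Y -> Z) : Prop :=
  forall V, opZ V -> rel_open opY C (fun y => C y /\ V (h y)).

Definition homeomorphic {Y Z : Type} (opY : (Y -> Prop) -> Prop) (opZ : (Z -> Prop) -> Prop)
  (C : Y -> Prop) (D : Z -> Prop) : Prop :=
  exists (h : Y -> Z) (g : Z -> Y),
    (forall y, C y -> D (h y) /\ g (h y) = y) /\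
    (forall z, D z -> C (g z) /\ h (g z) = z) /\
    cont_on opY opZ C h /\ cont_on opZ opY D g.

(* C_0 = [0,1],  C_{n+1} = C_n/3 ∪ (2/3 + C_n/3) *)
Fixpoint cantor_stage (n : nat) (y : R) : Prop :=
  match n with
  | O => 0 <= y <= 1
  | S m => cantor_stage m (3 * y) \/ cantor_stage m (3 * y - 2)
  end.

Definition middle_thirds (y : R) : Prop := forall n, cantor_stage n y.

Definition is_cantor_set {A : Type} (T : list A -> Prop) (C : branches T -> Prop) : Prop :=
  homeomorphic (@openX A T) (@open R_UniformSpace) C middle_thirds.

(* Player I strategy: (I's previous moves, II's previous moves) -> next x_t *)
(* Player II strategy: (I's moves x_0..x_t, II's previous moves) -> v_t *)
Fixpoint hist {A : Type} (sigma : list A -> list R -> A) (tau : list A -> list R -> R)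
  (n : nat) : list A * list R :=
  match n with
  | O => (nil, nil)
  | S m => let (xs, vs) := hist sigma tau m in
           let a := sigma xs vs in
           (xs ++ [a], vs ++ [tau (xs ++ [a]) vs])
  end.

Definition play_x {A : Type} sigma tau (t : nat) : A :=
  sigma (fst (@hist A sigma tau t)) (snd (hist sigma tau t)).

Definition play_v {A : Type} sigma tau (t : nat) : R :=
  tau (fst (@hist A sigma tau t) ++ [play_x sigma tau t]) (snd (hist sigma tau t)).

Definition winning_I {A : Type} (T : list A -> Prop) (f : branches T -> R)
  (sigma : list A -> list R -> A) : Prop :=
  forall tau : list A -> list R -> R,
    (forall t, T (prefix_of (play_x sigma tau) (S t))) /\
    forall Hx : is_branch T (play_x sigma tau),
      Finite (f (exist _ (play_x sigma tau) Hx)) <> LimSup_seq (play_v sigma tau).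

Definition I_has_winning_strategy {A : Type} (T : list A -> Prop) (f : branches T -> R) : Prop :=
  exists sigma : list A -> list R -> A, winning_I T f sigma.

(* Write D ⊆ ⋃_k N_k with N_k nowhere dense in C, and let h : C -> K be the
   homeomorphism onto the middle-thirds Cantor set K, with inverse g.  Player I
   always follows a "target" branch d ∈ D together with a length m such that,
   inside C, the cylinder of d of length m avoids N_k and h oscillates by less
   than 1/(k+1) on it (a safe cylinder, obtained by refinement lemma
   [refine_safe] from nowhere density, continuity of h and density of D).
   Once the cylinder has been played and II answers above r - 1/(k+1), Player I
   passes to stage k+1 and a new target extending the current position.
   - If the stage stabilises, the play is the final target x ∈ D, so
     f(x) >= r, while II's answers eventually stay <= r - 1/(k+1).
   - Otherwise h(targets) is Cauchy, its limit lies in K (K is closed), so the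
     play is x = g(lim) ∈ C; x lies in a safe cylinder of every stage, hence
     avoids every N_k and f(x) < r, whereas II's answers exceed r - 1/(k+1)
     for arbitrarily large k, so limsup >= r. *)

From Stdlib Require Import Reals List Lia Lra Classical ClassicalEpsilon FunctionalExtensionality ProofIrrelevance.
From Coquelicot Require Import Coquelicot.
Open Scope R_scope.

Lemma cantor_stage_complement_open n : forall y, ~ cantor_stage n y ->
  exists d, 0 < d /\ forall w, Rabs (w - y) < d -> ~ cantor_stage n w.
Proof.
  induction n as [|n IH]; intros y Hy; simpl in *.
  - apply not_and_or in Hy as [Hy|Hy].
    + exists (- y). split; [lra|]. intros w Hw [H1 H2]. apply Rabs_def2 in Hw. lra.
    + exists (y - 1). split; [lra|]. intros w Hw [H1 H2]. apply Rabs_def2 in Hw. lra.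
  - apply not_or_and in Hy as [Hleft Hright].
    destruct (IH _ Hleft) as [d1 [Hd1 H1]], (IH _ Hright) as [d2 [Hd2 H2]].
    exists (Rmin d1 d2 / 3). split; [apply Rmin_case; lra|].
    pose proof (Rmin_l d1 d2). pose proof (Rmin_r d1 d2).
    intros w Hw; apply Rabs_def2 in Hw; intros [Hw'|Hw'].
    + apply (H1 (3 * w)); [apply Rabs_def1; lra|exact Hw'].
    + apply (H2 (3 * w - 2)); [apply Rabs_def1; lra|exact Hw'].
Qed.

Lemma middle_thirds_0 : middle_thirds 0.
Proof.
  intro n. induction n as [|n IH]; simpl; [lra|].
  left. now rewrite Rmult_0_r.
Qed.

Lemma middle_thirds_closed (z : nat -> R) l :
  (forall n, middle_thirds (z n)) -> Un_cv z l -> middle_thirds l.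
Proof.
  intros Hz Hl n. apply NNPP; intro Hn.
  destruct (cantor_stage_complement_open n l Hn) as [d [Hd Hfar]].
  destruct (Hl d Hd) as [N HN].
  apply (Hfar (z N)); [apply HN; lia|apply Hz].
Qed.

Lemma LimSup_le_of_eventually_le (u : nat -> R) c l :
  Finite l = LimSup_seq u -> (exists N, forall n, (N <= n)%nat -> u n <= c) -> l <= c.
Proof.
  intros Hl [N HN].
  destruct (ex_LimSup_seq u) as [l' Hl'].
  rewrite (is_LimSup_seq_unique _ _ Hl') in Hl. subst l'.
  destruct (Rle_or_lt l c) as [Hle|Hlt]; [exact Hle|exfalso].
  assert (He : 0 < l - c) by lra.
  destruct (proj1 (Hl' (mkposreal _ He)) N) as [n [Hn Hun]].
  simpl in Hun. specialize (HN n Hn). lra.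
Qed.

Lemma LimSup_ge_of_frequently_gt (u : nat -> R) c l :
  Finite l = LimSup_seq u ->
  (forall e, 0 < e -> forall N, exists n, (N <= n)%nat /\ c - e < u n) -> c <= l.
Proof.
  intros Hl Hfreq.
  destruct (ex_LimSup_seq u) as [l' Hl'].
  rewrite (is_LimSup_seq_unique _ _ Hl') in Hl. subst l'.
  destruct (Rle_or_lt c l) as [Hle|Hlt]; [exact Hle|exfalso].
  assert (He : 0 < (c - l) / 2) by lra.
  destruct (proj2 (Hl' (mkposreal _ He))) as [N HN]. simpl in HN.
  destruct (Hfreq _ He N) as [n [Hn Hun]].
  specialize (HN n Hn). lra.
Qed.

Lemma nat_seq_monotone (u : nat -> nat) :
  (forall t, (u t <= u (S t))%nat) -> forall t t', (t <= t')%nat -> (u t <= u t')%nat.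
Proof.
  intros Hmon t t' Htt'. induction Htt' as [|t' _ IH]; [lia|].
  specialize (Hmon t'). lia.
Qed.

Lemma nat_seq_stabilizes_or_unbounded (u : nat -> nat) :
  (forall t, (u t <= u (S t))%nat) ->
  (exists t0, forall t, (t0 <= t)%nat -> u t = u t0) \/ (forall k, exists t, (k < u t)%nat).
Proof.
  intros Hmon.
  destruct (classic (exists t0, forall t, (t0 <= t)%nat -> u t = u t0)) as [Hstab|Hnot];
    [now left|right].
  assert (Hgrow : forall t0, exists t, (u t0 < u t)%nat).
  { intro t0. apply NNPP. intro Hno. apply Hnot. exists t0. intros t Ht.
    pose proof (nat_seq_monotone u Hmon t0 t Ht).
    destruct (Nat.eq_dec (u t) (u t0)) as [E|E]; [exact E|].
    exfalso. apply Hno. exists t. lia. }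
  induction k as [|k [t Ht]].
  - destruct (Hgrow 0%nat) as [t Ht]. exists t. lia.
  - destruct (Hgrow t) as [t' Ht']. exists t'. lia.
Qed.

Lemma nat_seq_unit_steps_hit (u : nat -> nat) :
  u 0%nat = 0%nat -> (forall t, (u (S t) <= S (u t))%nat) ->
  forall k t, (k < u t)%nat -> exists j, u j = k /\ u (S j) = S k.
Proof.
  intros H0 Hstep k t. induction t as [|t IH]; intro Hk; [lia|].
  destruct (Nat.lt_ge_cases k (u t)) as [Hlt|Hge]; [exact (IH Hlt)|].
  specialize (Hstep t). exists t. lia.
Qed.

Lemma prefix_eq_iff {A : Type} (x y : nat -> A) n :
  prefix_of x n = prefix_of y n <-> forall i, (i < n)%nat -> x i = y i.
Proof.
  unfold prefix_of. induction n as [|n IH].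
  - split; [intros _ i Hi; lia|reflexivity].
  - rewrite seq_S, !map_app. simpl. split.
    + intros H. apply app_inj_tail in H as [Hpre Hlast].
      intros i Hi. destruct (Nat.eq_dec i n) as [->|Hne]; [exact Hlast|].
      apply (proj1 IH Hpre). lia.
    + intros H. rewrite (proj2 IH), (H n) by (auto; lia). reflexivity.
Qed.

Lemma length_prefix {A : Type} (x : nat -> A) n : length (prefix_of x n) = n.
Proof. unfold prefix_of. now rewrite length_map, length_seq. Qed.

Section BranchSpace.
Context {A : Type} {T : list A -> Prop}.
Local Notation X := (branches T).

Definition agree (x y : X) (n : nat) : Prop :=
  forall i, (i < n)%nat -> proj1_sig x i = proj1_sig y i.

Lemma agree_trans x y z n : agree x y n -> agree y z n -> agree x z n.
Proof. intros Hxy Hyz i Hi. rewrite Hxy by exact Hi. apply Hyz, Hi. Qed.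

Lemma agree_le x y n m : (n <= m)%nat -> agree x y m -> agree x y n.
Proof. intros Hnm H i Hi. apply H. lia. Qed.

Lemma branch_eq (x y : X) : (forall i, proj1_sig x i = proj1_sig y i) -> x = y.
Proof.
  destruct x as [x Hx], y as [y Hy]. simpl. intro E.
  apply functional_extensionality in E. subst y. f_equal. apply proof_irrelevance.
Qed.

Lemma openX_agree (U : X -> Prop) x :
  openX U -> U x -> exists n, forall y, agree y x n -> U y.
Proof.
  intros HU Hx. destruct (HU x Hx) as [s [_ [Hxs Hs]]].
  exists (length s). intros y Hyx. apply Hs. unfold cyl in *.
  rewrite <- Hxs at 2. apply prefix_eq_iff. exact Hyx.
Qed.

Lemma agree_open (x : X) n : openX (fun y => agree y x n).
Proof.
  intros y Hy. exists (prefix_of (proj1_sig y) n).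
  split; [apply (proj2_sig y)|]. unfold cyl. rewrite length_prefix. split; [reflexivity|].
  intros z Hz. apply (agree_trans z y x); [|exact Hy].
  intros i Hi. exact (proj1 (prefix_eq_iff _ _ n) Hz i Hi).
Qed.

Lemma rel_open_agree (C V : X -> Prop) x :
  rel_open openX C V -> V x -> exists n, forall y, C y -> agree y x n -> V y.
Proof.
  intros [U [HU HV]] Hx. destruct (openX_agree U x HU (proj1 (proj1 (HV x) Hx))) as [n Hn].
  exists n. intros y Hy Hyx. apply HV. auto.
Qed.

Lemma rel_open_agree_set (C : X -> Prop) x n :
  rel_open openX C (fun y => C y /\ agree y x n).
Proof. exists (fun y => agree y x n). split; [apply agree_open|]. intro y. tauto. Qed.

End BranchSpace.

Section Refinement.
Context {A : Type} {T : list A -> Prop} (C : branches T -> Prop).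
Local Notation X := (branches T).

Lemma nowhere_dense_avoid (N : X -> Prop) x n :
  nowhere_dense_in openX C N -> C x ->
  exists y m, C y /\ agree y x n /\ forall z, C z -> agree z y m -> ~ N z.
Proof.
  intros [_ Hint] Hx. apply NNPP. intro Hno. apply (Hint x).
  exists (fun y => C y /\ agree y x n). split; [apply rel_open_agree_set|].
  split; [split; [exact Hx|intros i _; reflexivity]|].
  intros y [Hy Hyx]. split; [exact Hy|]. intros V HV HVy.
  apply NNPP. intro Hdisj. destruct (rel_open_agree C V y HV HVy) as [m Hm].
  apply Hno. exists y, m. split; [exact Hy|]. split; [exact Hyx|].
  intros z Hz Hzy HNz. apply Hdisj. exists z. split; [apply Hm|]; assumption.
Qed.

Lemma continuous_agree (h : X -> R) x e :
  cont_on openX open C h -> C x -> 0 < e ->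
  exists m, forall y, C y -> agree y x m -> Rabs (h y - h x) < e.
Proof.
  intros Hh Hx He.
  assert (Hball : @open R_UniformSpace (fun w => Rabs (w - h x) < e)).
  { intros w Hw. assert (Hp : 0 < e - Rabs (w - h x)) by lra.
    exists (mkposreal _ Hp). intros w' Hw'. change (Rabs (w' - w) < e - Rabs (w - h x)) in Hw'.
    replace (w' - h x) with ((w' - w) + (w - h x)) by ring.
    eapply Rle_lt_trans; [apply Rabs_triang|lra]. }
  assert (Hhx : Rabs (h x - h x) < e) by (rewrite Rminus_diag, Rabs_R0; exact He).
  destruct (rel_open_agree C _ x (Hh _ Hball) (conj Hx Hhx)) as [m Hm].
  exists m. intros y Hy Hyx. exact (proj2 (Hm y Hy Hyx)).
Qed.

Lemma dense_agree (D : X -> Prop) x n :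
  dense_in openX C D -> C x -> exists d, D d /\ agree d x n.
Proof.
  intros [_ Hcl] Hx.
  destruct (proj2 (Hcl x Hx) _ (rel_open_agree_set C x n)) as [d [[_ Hd] HDd]];
    [split; [exact Hx|intros i _; reflexivity]|].
  exists d. split; assumption.
Qed.

Definition safe_cylinder (N : X -> Prop) (h : X -> R) (e : R) (d : X) (m : nat) : Prop :=
  forall y, C y -> agree y d m -> ~ N y /\ Rabs (h y - h d) < e.

Lemma refine_safe (D N : X -> Prop) (h : X -> R) e x n :
  dense_in openX C D -> nowhere_dense_in openX C N -> cont_on openX open C h ->
  C x -> 0 < e ->
  exists d m, D d /\ agree d x n /\ safe_cylinder N h e d m.
Proof.
  intros HD HN Hh Hx He.
  destruct (nowhere_dense_avoid N x n HN Hx) as [y [m1 [Hy [Hyx Hm1]]]].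
  assert (He2 : 0 < e / 2) by lra.
  destruct (continuous_agree h y (e / 2) Hh Hy He2) as [m2 Hm2].
  set (m := Nat.max n (Nat.max m1 m2)).
  destruct (dense_agree D y m HD Hy) as [d [Hd Hdy]].
  assert (HCd : C d) by exact (proj1 HD d Hd).
  exists d, m. split; [exact Hd|]. split.
  { apply (agree_trans d y x); [|exact Hyx]. apply (agree_le d y n m); [lia|exact Hdy]. }
  intros z Hz Hzd.
  assert (Hzy : agree z y m) by exact (agree_trans z d y m Hzd Hdy).
  split; [apply Hm1; [exact Hz|apply (agree_le z y m1 m); [lia|exact Hzy]]|].
  pose proof (Hm2 z Hz (agree_le z y m2 m ltac:(lia) Hzy)) as Ez.
  pose proof (Hm2 d HCd (agree_le d y m2 m ltac:(lia) Hdy)) as Ed.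
  apply Rabs_def2 in Ez, Ed. apply Rabs_def1; lra.
Qed.

End Refinement.

Lemma cantor_limit {A : Type} {T : list A -> Prop} (C : branches T -> Prop)
  (h : branches T -> R) (g : R -> branches T)
  (Hhg : forall y, C y -> middle_thirds (h y) /\ g (h y) = y)
  (Hg : cont_on open openX middle_thirds g)
  (xs : nat -> branches T) l :
  (forall t, C (xs t)) -> Un_cv (fun t => h (xs t)) l -> middle_thirds l ->
  forall n, exists N, forall t, (N <= t)%nat -> agree (xs t) (g l) n.
Proof.
  intros HC Hcv Hl n.
  destruct (Hg _ (agree_open (g l) n)) as [U [HU HUe]].
  assert (HUl : U l) by (apply (HUe l); split; [exact Hl|intros i _; reflexivity]).
  destruct (HU l HUl) as [e He].
  destruct (Hcv e (cond_pos e)) as [N HN].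
  exists N. intros t Ht.
  destruct (Hhg (xs t) (HC t)) as [HKt Hght].
  rewrite <- Hght. apply (HUe (h (xs t))). split; [apply He, HN, Ht|exact HKt].
Qed.

Section Strategy.
Context (A : Type) (T : list A -> Prop) (f : branches T -> R) (r : R)
  (C : branches T -> Prop) (h : branches T -> R) (g : R -> branches T)
  (Hhg : forall y, C y -> middle_thirds (h y) /\ g (h y) = y)
  (Hgh : forall z, middle_thirds z -> C (g z) /\ h (g z) = z)
  (Hh : cont_on openX open C h)
  (Hg : cont_on open openX middle_thirds g)
  (Ns : nat -> branches T -> Prop)
  (HNs : forall k, nowhere_dense_in openX C (Ns k))
  (Hcov : forall y, C y /\ f y >= r -> exists k, Ns k y)
  (Hdense : dense_in openX C (fun x => C x /\ f x >= r)).

Local Notation X := (branches T).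

Definition D (x : X) : Prop := C x /\ f x >= r.

Definition eps (k : nat) : R := / INR (S k).

Lemma eps_pos k : 0 < eps k.
Proof. apply Rinv_0_lt_compat, lt_0_INR. lia. Qed.

Lemma eps_anti k k' : (k <= k')%nat -> eps k' <= eps k.
Proof. intro H. apply Rinv_le_contravar; [apply lt_0_INR; lia|apply le_INR; lia]. Qed.

Lemma eps_small e : 0 < e -> exists k, eps k < e.
Proof.
  intro He. destruct (archimed_cor1 e He) as [N [HN HNpos]].
  exists (N - 1)%nat. unfold eps. now replace (S (N - 1)) with N by lia.
Qed.

Definition refinement (k : nat) (d0 : X) (n : nat) : X * nat :=
  epsilon (inhabits (g 0, 0%nat))
    (fun p => C d0 -> D (fst p) /\ agree (fst p) d0 n /\
                      safe_cylinder C (Ns k) h (eps k) (fst p) (snd p)).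

Lemma refinement_spec k d0 n : C d0 ->
  let p := refinement k d0 n in
  D (fst p) /\ agree (fst p) d0 n /\ safe_cylinder C (Ns k) h (eps k) (fst p) (snd p).
Proof.
  intro Hd0. cbv zeta. unfold refinement.
  match goal with |- context [epsilon ?i ?P] => apply (epsilon_spec i P); [|exact Hd0] end.
  destruct (refine_safe C D (Ns k) h (eps k) d0 n Hdense (HNs k) Hh Hd0 (eps_pos k))
    as [d [m Hdm]].
  exists (d, m). intros _. exact Hdm.
Qed.

(* Player I's state: the current stage, the target branch she is following, and
   the length of the safe cylinder around the target. *)
Record state : Type := mkState { stage : nat; target : X; depth : nat }.

Definition refine_state (k : nat) (d0 : X) (n : nat) : state :=
  mkState k (fst (refinement k d0 n)) (snd (refinement k d0 n)).

(* Once the safe cylinder has been played and II answers above r - eps(k),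
   I moves to stage k+1 and a new target extending the position so far. *)
Definition step (s : state) (t : nat) (v : R) : state :=
  if Compare_dec.le_dec (depth s) (S t) then
    if Rlt_dec (r - eps (stage s)) v then refine_state (S (stage s)) (target s) (S t)
    else s
  else s.

Definition init : state := refine_state 0 (g 0) 0.

Fixpoint run (V : nat -> R) (n : nat) : state :=
  match n with O => init | S n => step (run V n) n (V n) end.

Definition sigma (xs : list A) (vs : list R) : A :=
  proj1_sig (target (run (fun i => nth i vs 0) (length vs))) (length vs).

Lemma run_ext V W n : (forall i, (i < n)%nat -> V i = W i) -> run V n = run W n.
Proof.
  induction n as [|n IH]; intro H; simpl; [reflexivity|].
  rewrite IH, (H n) by (auto; lia). reflexivity.
Qed.

Lemma step_cases s t v :
  ((depth s <= S t)%nat /\ r - eps (stage s) < v /\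
   step s t v = refine_state (S (stage s)) (target s) (S t)) \/
  (~ ((depth s <= S t)%nat /\ r - eps (stage s) < v) /\ step s t v = s).
Proof.
  unfold step. destruct (Compare_dec.le_dec _ _) as [Hle|Hle]; [destruct (Rlt_dec _ _) as [Hlt|Hlt]|];
    [left|right|right]; tauto.
Qed.

Definition valid (s : state) : Prop :=
  D (target s) /\ safe_cylinder C (Ns (stage s)) h (eps (stage s)) (target s) (depth s).

Lemma valid_refine k d0 n : C d0 -> valid (refine_state k d0 n).
Proof. intro Hd0. destruct (refinement_spec k d0 n Hd0) as [HD [_ Hsafe]]. split; assumption. Qed.

Lemma valid_step s t v : valid s -> valid (step s t v).
Proof.
  intro Hs. destruct (step_cases s t v) as [[_ [_ ->]]|[_ ->]]; [|exact Hs].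
  apply valid_refine, (proj1 (proj1 Hs)).
Qed.

Lemma step_target_agree s t v : valid s -> agree (target (step s t v)) (target s) (S t).
Proof.
  intro Hs. destruct (step_cases s t v) as [[_ [_ ->]]|[_ ->]]; [|intros i _; reflexivity].
  exact (proj1 (proj2 (refinement_spec _ _ _ (proj1 (proj1 Hs))))).
Qed.

Lemma valid_run V n : valid (run V n).
Proof.
  induction n as [|n IH]; [apply valid_refine, (Hgh 0 middle_thirds_0)|].
  apply valid_step, IH.
Qed.

Section Play.
Variable tau : list A -> list R -> R.
Local Notation Vv := (play_v sigma tau).
Local Notation Xp := (play_x sigma tau).
Local Notation St t := (run (play_v sigma tau) t).

Lemma hist_snd t : snd (hist sigma tau t) = map Vv (seq 0 t).
Proof.
  induction t as [|t IH]; [reflexivity|].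
  rewrite seq_S, map_app, <- IH. cbn [hist map].
  unfold play_v, play_x. destruct (hist sigma tau t) as [xs vs] eqn:E. simpl. now rewrite E.
Qed.

Lemma play_x_target t : Xp t = proj1_sig (target (St t)) t.
Proof.
  unfold play_x at 1, sigma. rewrite hist_snd, length_map, length_seq.
  rewrite (run_ext _ Vv t); [reflexivity|].
  intros i Hi. rewrite nth_indep with (d' := Vv 0%nat) by (rewrite length_map, length_seq; lia).
  rewrite map_nth, seq_nth by lia. reflexivity.
Qed.

Lemma play_follows_target t i : (i <= t)%nat -> Xp i = proj1_sig (target (St t)) i.
Proof.
  induction t as [|t IH]; intro Hi.
  - replace i with 0%nat by lia. apply play_x_target.
  - destruct (Nat.eq_dec i (S t)) as [->|Hne]; [apply play_x_target|].
    rewrite IH by lia. symmetry. apply step_target_agree; [apply valid_run|lia].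
Qed.

Lemma play_legal t : T (prefix_of Xp (S t)).
Proof.
  replace (prefix_of Xp (S t)) with (prefix_of (proj1_sig (target (St t))) (S t));
    [apply (proj2_sig (target (St t)))|].
  apply prefix_eq_iff. intros i Hi. symmetry. apply play_follows_target. lia.
Qed.

Definition stage_at (t : nat) : nat := stage (St t).

Lemma stage_step t :
  (stage_at (S t) = stage_at t /\ St (S t) = St t /\
   ~ ((depth (St t) <= S t)%nat /\ r - eps (stage_at t) < Vv t)) \/
  (stage_at (S t) = S (stage_at t) /\
   (depth (St t) <= S t)%nat /\ r - eps (stage_at t) < Vv t).
Proof.
  unfold stage_at. change (St (S t)) with (step (St t) t (Vv t)).
  destruct (step_cases (St t) t (Vv t)) as [[Hd [Hv ->]]|[Hno ->]]; [right|left]; auto.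
Qed.

Lemma stage_mono_step t : (stage_at t <= stage_at (S t))%nat.
Proof. destruct (stage_step t) as [[E _]|[E _]]; lia. Qed.

(* If the stage stabilises, x is the final target, in D, while II's answers
   stay below r - eps(k) from some point on. *)
Lemma play_wins_if_stage_stabilizes t0 (Hx : is_branch T Xp) :
  (forall t, (t0 <= t)%nat -> stage_at t = stage_at t0) ->
  Finite (f (exist _ Xp Hx)) <> LimSup_seq Vv.
Proof.
  intros Hstab Hlim.
  assert (Hconst : forall t, (t0 <= t)%nat -> St t = St t0).
  { intros t Ht. induction Ht as [|t Ht IH]; [reflexivity|].
    destruct (stage_step t) as [[_ [E _]]|[E _]]; [congruence|].
    rewrite (Hstab t), (Hstab (S t)) in E by lia. lia. }
  assert (Hx_target : exist _ Xp Hx = target (St t0)).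
  { apply branch_eq. intro i. simpl.
    rewrite (play_follows_target (Nat.max t0 i) i), Hconst by lia. reflexivity. }
  assert (Hfx : f (exist _ Xp Hx) >= r) by (rewrite Hx_target; apply (valid_run Vv t0)).
  assert (Hlow : f (exist _ Xp Hx) <= r - eps (stage_at t0)).
  { apply (LimSup_le_of_eventually_le Vv _ _ Hlim).
    exists (Nat.max t0 (depth (St t0))). intros t Ht. apply Rnot_lt_le. intro Hv.
    destruct (stage_step t) as [[_ [_ Hno]]|[E _]].
    - apply Hno. unfold stage_at. rewrite Hconst by lia. split; [lia|exact Hv].
    - rewrite (Hstab t), (Hstab (S t)) in E by lia. lia. }
  pose proof (eps_pos (stage_at t0)). lra.
Qed.

Section Unbounded.
Hypothesis Hunb : forall k, exists t, (k < stage_at t)%nat.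

Lemma switch_time k :
  exists j, stage_at j = k /\ (depth (St j) <= S j)%nat /\ r - eps k < Vv j.
Proof.
  destruct (Hunb k) as [t Ht].
  assert (Hbound : forall t, (stage_at (S t) <= S (stage_at t))%nat)
    by (intro t'; destruct (stage_step t') as [[E _]|[E _]]; lia).
  destruct (nat_seq_unit_steps_hit stage_at eq_refl Hbound k t Ht) as [j [Hj HSj]].
  exists j. destruct (stage_step j) as [[E _]|[_ [Hd Hv]]]; [lia|].
  rewrite Hj in Hv. auto.
Qed.

Lemma targets_after_switch j t :
  (depth (St j) <= S j)%nat -> (j <= t)%nat ->
  agree (target (St t)) (target (St j)) (depth (St j)).
Proof.
  intros Hd Ht i Hi.
  rewrite <- (play_follows_target t i), <- (play_follows_target j i) by lia. reflexivity.
Qed.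

Lemma targets_cauchy : Cauchy_crit (fun t => h (target (St t))).
Proof.
  intros e He. destruct (eps_small (e / 2)) as [k Hk]; [lra|].
  destruct (switch_time k) as [j [Hj [Hd _]]].
  assert (Hsafe := proj2 (valid_run Vv j)). unfold stage_at in Hj. rewrite Hj in Hsafe.
  assert (Hclose : forall t, (j <= t)%nat -> Rabs (h (target (St t)) - h (target (St j))) < eps k)
    by (intros t Ht; apply Hsafe; [apply (valid_run Vv t)|apply targets_after_switch; auto]).
  exists j. intros n m Hn Hm. unfold R_dist.
  pose proof (Hclose n Hn) as En. pose proof (Hclose m Hm) as Em.
  apply Rabs_def2 in En, Em. apply Rabs_def1; lra.
Qed.

(* The play converges, through g, to a point of the Cantor set; so x ∈ C. *)
Lemma play_in_C (Hx : is_branch T Xp) : C (exist _ Xp Hx).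
Proof.
  destruct (Rcomplete.R_complete _ targets_cauchy) as [l Hl].
  assert (HC : forall t, C (target (St t))) by (intro t; apply (valid_run Vv t)).
  assert (HK : middle_thirds l)
    by (apply (middle_thirds_closed (fun t => h (target (St t))) l); [intro t; apply Hhg, HC|exact Hl]).
  replace (exist _ Xp Hx) with (g l); [apply (Hgh l HK)|].
  apply branch_eq. intro i. simpl.
  destruct (cantor_limit C h g Hhg Hg _ l HC Hl HK (S i)) as [N HN].
  rewrite (play_follows_target (Nat.max N i) i) by lia.
  symmetry. apply HN; lia.
Qed.

(* x avoids every N_k (it lies in the safe cylinder of stage k), so f(x) < r. *)
Lemma play_below_r (Hx : is_branch T Xp) : f (exist _ Xp Hx) < r.
Proof.
  apply Rnot_ge_lt. intro Hge.
  destruct (Hcov _ (conj (play_in_C Hx) Hge)) as [k Hk].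
  destruct (switch_time k) as [j [Hj [Hd _]]].
  assert (Hsafe := proj2 (valid_run Vv j)). unfold stage_at in Hj. rewrite Hj in Hsafe.
  apply (Hsafe _ (play_in_C Hx)); [|exact Hk].
  intros i Hi. apply play_follows_target. lia.
Qed.

(* II answers above r - eps(k) at the switch times of arbitrarily large stages. *)
Lemma limsup_ge_r l : Finite l = LimSup_seq Vv -> r <= l.
Proof.
  intro Hl. apply (LimSup_ge_of_frequently_gt Vv r l Hl). intros e He N.
  destruct (eps_small e He) as [k Hk].
  destruct (switch_time (Nat.max k (S (stage_at N)))) as [j [Hj [_ Hv]]].
  exists j. split.
  - destruct (Nat.le_gt_cases N j) as [Hle|Hgt]; [exact Hle|].
    pose proof (nat_seq_monotone stage_at stage_mono_step j N ltac:(lia)). lia.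
  - pose proof (eps_anti k (Nat.max k (S (stage_at N))) ltac:(lia)). lra.
Qed.

Lemma play_wins_if_stage_unbounded (Hx : is_branch T Xp) :
  Finite (f (exist _ Xp Hx)) <> LimSup_seq Vv.
Proof.
  intro Hlim. pose proof (limsup_ge_r _ Hlim). pose proof (play_below_r Hx). lra.
Qed.

End Unbounded.

End Play.

Lemma sigma_wins : winning_I T f sigma.
Proof.
  intro tau. split; [apply play_legal|]. intro Hx.
  destruct (nat_seq_stabilizes_or_unbounded _ (stage_mono_step tau)) as [[t0 Hstab]|Hunb].
  - exact (play_wins_if_stage_stabilizes tau t0 Hx Hstab).
  - exact (play_wins_if_stage_unbounded tau Hunb Hx).
Qed.

End Strategy.

Theorem mainTheorem8 (A : Type)
  (A_countable : exists e : A -> nat, forall a b, e a = e b -> a = b)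
  (A_nonempty : inhabited A)
  (T : list A -> Prop) (HT : is_pruned_tree T)
  (f : branches T -> R) (r : R) (C : branches T -> Prop)
  (HC : is_cantor_set T C)
  (Hmeagre : meagre_in (@openX A T) C (fun x => C x /\ f x >= r))
  (Hdense : dense_in (@openX A T) C (fun x => C x /\ f x >= r)) :
  I_has_winning_strategy T f.
Proof.
  destruct HC as (h & g & Hhg & Hgh & Hh & Hg).
  destruct Hmeagre as [_ [Ns [HNs Hcov]]].
  exists (sigma A T f r C h g Ns).
  exact (sigma_wins A T f r C h g Hhg Hgh Hh Hg Ns HNs Hcov Hdense).
Qed.
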